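(* Let $\mu$ and $\nu$ be positive Borel measures on $\mathbb{R}$ with finite moments of all orders and infinite support, and suppose there is a real polynomial $r$ of degree $1$ such that $\int_\mathbb{R} f\,d\mu=\int_\mathbb{R} f\,r\,d\nu$ for all polynomials $f$. Let $(P_n)_{n\ge0}$, resp. $(p_n)_{n\ge0}$, be orthogonal polynomials (with $\deg P_n=\deg p_n=n$) for $\mu$, resp. $\nu$, with $\int P_nP_m\,d\mu=H_n\delta_{n,m}$ and $\int p_np_m\,d\nu=h_n\delta_{n,m}$, and let $\Phi_n=P_n/\sqrt{H_n}$, $\phi_n=p_n/\sqrt{h_n}$. Then for all $n\ge0$ \[ \phi_n=A_n\Phi_n+B_n\Phi_{n-1},\qquad A_n=\frac{\mathrm{lc}(p_n)}{\mathrm{lc}(P_n)}\sqrt{\frac{H_n}{h_n}},\quad B_n=\mathrm{lc}(r)\sqrt{\frac{h_n}{H_{n-1}}}\frac{\mathrm{lc}(P_{n-1})}{\mathrm{lc}(p_n)}\ (n\ge1),\ B_0=0. \] Moreover, let $L$ be a linear operator on the space $\mathcal P$ of polynomials with $LP_n=\Lambda_nP_n$, $\Lambda_n\in\mathbb{R}$ (and set $\Lambda_{-1}=0$). Then the operator $T=rL$ on $\mathcal P$ satisfies, for all $n\ge0$, \[ T\phi_n=a_n\phi_{n+1}+b_n\phi_n+a_{n-1}\phi_{n-1}, \] with $a_{-1}=0$ and \[ a_n=\Lambda_nA_nB_{n+1}=\Lambda_n\,\mathrm{lc}(r)\frac{\mathrm{lc}(p_n)}{\mathrm{lc}(p_{n+1})}\sqrt{\frac{h_{n+1}}{h_n}},\qquad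 b_n=\Lambda_nA_n^2+\Lambda_{n-1}B_n^2 . \] In particular (taking $L$ the identity) multiplication by $r$ satisfies $r\phi_n=A_nB_{n+1}\phi_{n+1}+(A_n^2+B_n^2)\phi_n+A_{n-1}B_n\phi_{n-1}$.
   Context: $\mathrm{lc}(p)$ denotes the leading coefficient of a polynomial $p$. *)

From HB Require Import structures.
From mathcomp Require Import all_boot all_order all_algebra.
Set Implicit Arguments. Unset Strict Implicit. Unset Printing Implicit Defensive.
Import Order.TTheory GRing.Theory Num.Theory.
Local Open Scope ring_scope.

(* A "measure" is represented through its moment functional f |-> \int f dmu
   on polynomials (the only way the measure enters the statement). *)

Definition lin_functional (R : rcfType) (mu : {poly R} -> R) : Prop :=
  forall (a : R) (f g : {poly R}), mu (a *: f + g) = a * mu f + mu g.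

Definition lin_operator (R : rcfType) (L : {poly R} -> {poly R}) : Prop :=
  forall (a : R) (f g : {poly R}), L (a *: f + g) = a *: L f + L g.

(* moment functional of a positive Borel measure with infinite support:
   \int f^2 dmu > 0 for every nonzero polynomial f (Hamburger). *)
Definition pos_def_functional (R : rcfType) (mu : {poly R} -> R) : Prop :=
  lin_functional mu /\ forall f : {poly R}, f != 0 -> 0 < mu (f * f).

Definition orth_seq (R : rcfType) (mu : {poly R} -> R) (P : nat -> {poly R}) : Prop :=
  (forall n, size (P n) = n.+1) /\
  (forall n m, n != m -> mu (P n * P m) = 0).

Definition sqnorm (R : rcfType) (mu : {poly R} -> R) (P : nat -> {poly R}) (n : nat) : R :=
  mu (P n * P n).

Definition onp (R : rcfType) (mu : {poly R} -> R) (P : nat -> {poly R}) (n : nat) : {poly R} :=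
  (Num.sqrt (sqnorm mu P n))^-1 *: P n.

Definition prevp (R : rcfType) (F : nat -> {poly R}) (n : nat) : {poly R} :=
  if n is k.+1 then F k else 0.
Definition prevr (R : rcfType) (F : nat -> R) (n : nat) : R :=
  if n is k.+1 then F k else 0.

Definition Acoef (R : rcfType) (mu nu : {poly R} -> R) (P p : nat -> {poly R}) (n : nat) : R :=
  lead_coef (p n) / lead_coef (P n) * Num.sqrt (sqnorm mu P n / sqnorm nu p n).

Definition Bcoef (R : rcfType) (mu nu : {poly R} -> R) (r : {poly R})
  (P p : nat -> {poly R}) (n : nat) : R :=
  if n is k.+1 then
    lead_coef r * Num.sqrt (sqnorm nu p n / sqnorm mu P k) * (lead_coef (P k) / lead_coef (p n))
  else 0.

Definition acoef (R : rcfType) (mu nu : {poly R} -> R) (r : {poly R})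
  (P p : nat -> {poly R}) (Lam : nat -> R) (n : nat) : R :=
  Lam n * Acoef mu nu P p n * Bcoef mu nu r P p n.+1.

Definition bcoef (R : rcfType) (mu nu : {poly R} -> R) (r : {poly R})
  (P p : nat -> {poly R}) (Lam : nat -> R) (n : nat) : R :=
  Lam n * (Acoef mu nu P p n) ^+ 2 + prevr Lam n * (Bcoef mu nu r P p n) ^+ 2.

(* Since mu = r nu with deg r = 1, p_(n+1) is mu-orthogonal to all polynomials
   of degree < n, and r P_n is nu-orthogonal to all polynomials of degree < n.
   Each therefore lies in the span of two consecutive orthogonal polynomials of
   the other family, with coefficients read off from a leading coefficient and
   a single moment.  Normalised, these connection formulas read
   phi_n = A_n Phi_n + B_n Phi_(n-1) and r Phi_n = A_n phi_n + B_(n+1) phi_(n+1);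
   applying L to the first and substituting the second gives the three-term
   recurrence for r L. *)

From mathcomp Require Import all_boot all_order all_algebra.
From mathcomp Require Import ring.
Import Order.TTheory GRing.Theory Num.Theory.
Set Implicit Arguments. Unset Strict Implicit.
Local Open Scope ring_scope.

Section LinearFunctional.
Variables (R : rcfType) (mu : {poly R} -> R).
Hypothesis mu_lin : lin_functional mu.

Lemma lin_functional0 : mu 0 = 0.
Proof.
have := mu_lin 1 0 0; rewrite scale1r addr0 mul1r -{1}[mu 0]addr0.
by move/addrI.
Qed.

Lemma lin_functionalD f g : mu (f + g) = mu f + mu g.
Proof. by rewrite -{1}[f]scale1r mu_lin mul1r. Qed.

Lemma lin_functionalZ a f : mu (a *: f) = a * mu f.
Proof. by rewrite -[a *: f]addr0 mu_lin lin_functional0 addr0. Qed.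

Lemma lin_functionalB f g : mu (f - g) = mu f - mu g.
Proof. by rewrite -scaleN1r lin_functionalD lin_functionalZ mulN1r. Qed.

Lemma lin_functional_sum (I : Type) (s : seq I) (F : I -> {poly R}) :
  mu (\sum_(i <- s) F i) = \sum_(i <- s) mu (F i).
Proof.
elim: s => [|x s IH]; first by rewrite !big_nil lin_functional0.
by rewrite !big_cons lin_functionalD IH.
Qed.

End LinearFunctional.

Section LinearOperator.
Variables (R : rcfType) (L : {poly R} -> {poly R}).
Hypothesis L_lin : lin_operator L.

Lemma lin_operator0 : L 0 = 0.
Proof.
have := L_lin 1 0 0; rewrite !scale1r addr0 -{1}[L 0]addr0.
by move/addrI.
Qed.

Lemma lin_operatorD f g : L (f + g) = L f + L g.
Proof. by rewrite -{1}[f]scale1r L_lin scale1r. Qed.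

Lemma lin_operatorZ a f : L (a *: f) = a *: L f.
Proof. by rewrite -[a *: f]addr0 L_lin lin_operator0 addr0. Qed.

End LinearOperator.

Section DegreeBasis.
Variable F : fieldType.

Lemma size_sub_lead_le (q f : {poly F}) n :
  size q = n.+1 -> (size f <= n.+1)%N ->
  (size (f - (f`_n / lead_coef q) *: q)%R <= n)%N.
Proof.
move=> sq sf; have qn : q`_n = lead_coef q by rewrite lead_coefE sq.
apply/leq_sizeP => j; rewrite leq_eqVlt => /orP[/eqP <-|ltnj].
  by rewrite coefB coefZ qn mulfVK ?subrr // lead_coef_eq0 -size_poly_eq0 sq.
have sqj : (size q <= j)%N by rewrite sq.
by rewrite coefB coefZ (nth_default _ (leq_trans sf ltnj)) (nth_default _ sqj) mulr0 subr0.
Qed.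

Variables (P : nat -> {poly F}) (sizeP : forall n, size (P n) = n.+1).

Lemma degree_basis_span N (f : {poly F}) :
  (size f <= N)%N -> exists c : nat -> F, f = \sum_(k < N) c k *: P k.
Proof.
elim: N f => [|N IH] f sf.
  by exists (fun _ => 0); rewrite big_ord0; apply/eqP; rewrite -size_poly_leq0.
set d := f`_N / lead_coef (P N).
have [c fE] := IH _ (size_sub_lead_le (sizeP N) sf).
exists (fun k => if k == N then d else c k).
rewrite big_ord_recr /= eqxx -{1}(subrK (d *: P N) f) fE; congr (_ + _).
by apply: eq_bigr => i _; rewrite ltn_eqF.
Qed.

End DegreeBasis.

Section Orthogonal.
Variables (R : rcfType) (mu : {poly R} -> R) (P : nat -> {poly R}).
Hypotheses (mu_lin : lin_functional mu) (P_orth : orth_seq mu P).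

Let sizeP : forall n, size (P n) = n.+1 := P_orth.1.

Lemma orth_poly_neq0 n : P n != 0.
Proof. by rewrite -size_poly_eq0 sizeP. Qed.

Lemma coef_orth_top n : (P n)`_n = lead_coef (P n).
Proof. by rewrite lead_coefE sizeP. Qed.

Lemma lead_coef_orth_neq0 n : lead_coef (P n) != 0.
Proof. by rewrite lead_coef_eq0 orth_poly_neq0. Qed.

Lemma orth_poly_low n (f : {poly R}) : (size f <= n)%N -> mu (f * P n) = 0.
Proof.
move=> /(degree_basis_span sizeP) [c ->].
rewrite mulr_suml (lin_functional_sum mu_lin) big1 // => k _.
by rewrite -scalerAl (lin_functionalZ mu_lin) P_orth.2 ?mulr0 // ltn_eqF.
Qed.

Lemma orth_poly_top n (f : {poly R}) :
  (size f <= n.+1)%N -> mu (f * P n) = f`_n / lead_coef (P n) * sqnorm mu P n.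
Proof.
move=> sf; set d := f`_n / lead_coef (P n).
rewrite -(subrK (d *: P n) f) mulrDl (lin_functionalD mu_lin).
by rewrite orth_poly_low ?size_sub_lead_le // add0r -scalerAl (lin_functionalZ mu_lin).
Qed.

Hypothesis mu_pos : forall f : {poly R}, f != 0 -> 0 < mu (f * f).

Lemma sqnorm_gt0 n : 0 < sqnorm mu P n.
Proof. exact: mu_pos (orth_poly_neq0 n). Qed.

Lemma sqrt_sqnorm_neq0 n : Num.sqrt (sqnorm mu P n) != 0.
Proof. by rewrite gt_eqF // sqrtr_gt0 sqnorm_gt0. Qed.

Lemma sqnorm_sqrtE n : sqnorm mu P n = Num.sqrt (sqnorm mu P n) ^+ 2.
Proof. by rewrite sqr_sqrtr // ltW // sqnorm_gt0. Qed.

Lemma orth_poly_onpE n : P n = Num.sqrt (sqnorm mu P n) *: onp mu P n.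
Proof. by rewrite /onp scalerA divff ?scale1r // sqrt_sqnorm_neq0. Qed.

Lemma orth_complement_eq0 n (g : {poly R}) :
  (size g <= n)%N -> (forall k, (k < n)%N -> mu (g * P k) = 0) -> g = 0.
Proof.
move=> /(degree_basis_span sizeP) [c gE] g_orth.
have : mu (g * g) = 0.
  rewrite {2}gE mulr_sumr (lin_functional_sum mu_lin) big1 // => k _.
  by rewrite -scalerAr (lin_functionalZ mu_lin) g_orth ?mulr0.
by apply: contra_eq => /mu_pos /lt0r_neq0.
Qed.

Lemma orth_two_term n (f : {poly R}) :
  (size f <= n.+2)%N -> (forall k, (k < n)%N -> mu (f * P k) = 0) ->
  f = (f`_n.+1 / lead_coef (P n.+1)) *: P n.+1
      + (mu (f * P n) / sqnorm mu P n) *: P n.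
Proof.
move=> sf f_orth; apply/eqP; rewrite -subr_eq0; apply/eqP.
set d := mu _ / _.
apply: (orth_complement_eq0 (n := n.+1)) => [|k ltkn].
  rewrite opprD addrA; apply: leq_trans (size_polyD _ _) _.
  by rewrite geq_max size_sub_lead_le // size_polyN (leq_trans (size_scale_leq _ _)) ?sizeP.
rewrite mulrBl (lin_functionalB mu_lin) mulrDl (lin_functionalD mu_lin) -!scalerAl.
rewrite !(lin_functionalZ mu_lin) (P_orth.2 n.+1 k) ?gtn_eqF // mulr0 add0r.
move: ltkn; rewrite ltnS leq_eqVlt => /orP[/eqP ->|ltkn].
  by rewrite /d mulfVK ?subrr // gt_eqF // sqnorm_gt0.
by rewrite f_orth // P_orth.2 ?gtn_eqF // mulr0 subrr.
Qed.

End Orthogonal.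

Section ChristoffelTransform.
Variables (R : rcfType) (mu nu : {poly R} -> R) (r : {poly R}) (P p : nat -> {poly R}).
Hypotheses (mu_pd : pos_def_functional mu) (nu_pd : pos_def_functional nu).
Hypotheses (size_r : size r = 2) (mu_nu : forall f, mu f = nu (f * r)).
Hypotheses (P_orth : orth_seq mu P) (p_orth : orth_seq nu p).

Let r_neq0 : r != 0. Proof. by rewrite -size_poly_eq0 size_r. Qed.
Let mu_lin := mu_pd.1.
Let nu_lin := nu_pd.1.
Let H_gt0 := sqnorm_gt0 P_orth mu_pd.2.
Let h_gt0 := sqnorm_gt0 p_orth nu_pd.2.
Let nonzero := (sqrt_sqnorm_neq0 P_orth mu_pd.2, sqrt_sqnorm_neq0 p_orth nu_pd.2,
                lead_coef_orth_neq0 P_orth, lead_coef_orth_neq0 p_orth,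
                fun n => lt0r_neq0 (H_gt0 n), fun n => lt0r_neq0 (h_gt0 n)).

Lemma size_orth_mulr k : size (P k * r) = k.+2.
Proof. by rewrite size_mul ?(orth_poly_neq0 P_orth) // P_orth.1 size_r addn2. Qed.

Lemma coef_orth_mulr k : (P k * r)`_k.+1 = lead_coef (P k) * lead_coef r.
Proof. by rewrite -lead_coefM lead_coefE size_orth_mulr. Qed.

Lemma orth_connection0 : p 0 = (lead_coef (p 0) / lead_coef (P 0)) *: P 0.
Proof.
apply/eqP; rewrite -subr_eq0 -size_poly_leq0 -(coef_orth_top p_orth).
by rewrite size_sub_lead_le ?P_orth.1 ?p_orth.1.
Qed.

Lemma orth_connectionS n :
  p n.+1 = (lead_coef (p n.+1) / lead_coef (P n.+1)) *: P n.+1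
    + (lead_coef (P n) * lead_coef r * sqnorm nu p n.+1
       / (lead_coef (p n.+1) * sqnorm mu P n)) *: P n.
Proof.
have mu_nuE k f : mu (f * P k) = nu ((P k * r) * f) by rewrite mu_nu -mulrA mulrC.
rewrite [LHS](orth_two_term mu_lin P_orth mu_pd.2 (n := n) (f := p n.+1)) ?p_orth.1 //.
  congr (_ *: _ + _ *: _); first by rewrite (coef_orth_top p_orth).
  rewrite mu_nuE (orth_poly_top nu_lin p_orth) ?size_orth_mulr //.
  by rewrite coef_orth_mulr; field; rewrite ?nonzero.
by move=> k ltkn; rewrite mu_nuE (orth_poly_low nu_lin p_orth) ?size_orth_mulr.
Qed.

Lemma mulr_orth_connection n :
  r * P n = (lead_coef r * lead_coef (P n) / lead_coef (p n.+1)) *: p n.+1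
    + (lead_coef (p n) * sqnorm mu P n / (lead_coef (P n) * sqnorm nu p n)) *: p n.
Proof.
have nu_muE k : nu (r * P n * p k) = mu (p k * P n).
  by rewrite mu_nu mulrC [r * _]mulrC mulrA.
have size_rP : (size (r * P n)%R <= n.+2)%N by rewrite mulrC size_orth_mulr.
rewrite [LHS](orth_two_term nu_lin p_orth nu_pd.2 (n := n) size_rP).
  congr (_ *: _ + _ *: _); first by rewrite [r * _]mulrC coef_orth_mulr [_ * lead_coef r]mulrC.
  rewrite nu_muE (orth_poly_top mu_lin P_orth) ?p_orth.1 // (coef_orth_top p_orth).
  by field; rewrite ?nonzero.
by move=> k ltkn; rewrite nu_muE (orth_poly_low mu_lin P_orth) // p_orth.1.
Qed.

Lemma Acoef_sqrtE n :
  Acoef mu nu P p n = lead_coef (p n) / lead_coef (P n)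
                      * (Num.sqrt (sqnorm mu P n) / Num.sqrt (sqnorm nu p n)).
Proof. by rewrite /Acoef sqrtrM ?sqrtrV // ltW. Qed.

Lemma Bcoef_sqrtE n :
  Bcoef mu nu r P p n.+1 = lead_coef r * lead_coef (P n) / lead_coef (p n.+1)
                           * (Num.sqrt (sqnorm nu p n.+1) / Num.sqrt (sqnorm mu P n)).
Proof. by rewrite /Bcoef sqrtrM ?sqrtrV ?ltW //; ring. Qed.

Lemma onp_connection n :
  onp nu p n = Acoef mu nu P p n *: onp mu P n
               + Bcoef mu nu r P p n *: prevp (onp mu P) n.
Proof.
apply: (scalerI (sqrt_sqnorm_neq0 p_orth nu_pd.2 n)).
rewrite -(orth_poly_onpE p_orth nu_pd.2) [in RHS]/onp.
case: n => [|n]; rewrite [prevp _ _]/=.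
  rewrite [LHS]orth_connection0 scaler0 addr0 !scalerA Acoef_sqrtE; congr (_ *: _).
  by field; rewrite ?nonzero.
rewrite [LHS]orth_connectionS scalerDr !scalerA Acoef_sqrtE Bcoef_sqrtE.
congr (_ *: _ + _ *: _); first by field; rewrite ?nonzero.
set s := Num.sqrt (sqnorm nu p n.+1); set t := Num.sqrt (sqnorm mu P n).
rewrite (sqnorm_sqrtE p_orth nu_pd.2) (sqnorm_sqrtE P_orth mu_pd.2) -/s -/t.
by field; rewrite ?nonzero.
Qed.

Lemma mulr_onp_connection n :
  r * onp mu P n = Acoef mu nu P p n *: onp nu p n
                   + Bcoef mu nu r P p n.+1 *: onp nu p n.+1.
Proof.
apply: (scalerI (sqrt_sqnorm_neq0 P_orth mu_pd.2 n)).
rewrite scalerAr -(orth_poly_onpE P_orth mu_pd.2) [in RHS]/onp mulr_orth_connection.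
rewrite addrC scalerDr !scalerA Acoef_sqrtE Bcoef_sqrtE.
congr (_ *: _ + _ *: _); last by field; rewrite ?nonzero.
set s := Num.sqrt (sqnorm nu p n); set t := Num.sqrt (sqnorm mu P n).
rewrite (sqnorm_sqrtE p_orth nu_pd.2) (sqnorm_sqrtE P_orth mu_pd.2) -/s -/t.
by field; rewrite ?nonzero.
Qed.

Lemma acoefE (Lam : nat -> R) n :
  acoef mu nu r P p Lam n = Lam n * lead_coef r * (lead_coef (p n) / lead_coef (p n.+1))
                            * Num.sqrt (sqnorm nu p n.+1 / sqnorm nu p n).
Proof.
rewrite /acoef Acoef_sqrtE Bcoef_sqrtE sqrtrM ?sqrtrV ?ltW //.
by field; rewrite ?nonzero.
Qed.

End ChristoffelTransform.

Section ThreeTermRecurrence.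
Variables (R : rcfType) (r : {poly R}) (Phi phi : nat -> {poly R}) (A B : nat -> R).
Hypotheses (phiE : forall n, phi n = A n *: Phi n + B n *: prevp Phi n)
           (mulr_PhiE : forall n, r * Phi n = A n *: phi n + B n.+1 *: phi n.+1).

Lemma three_term_recurrence (L : {poly R} -> {poly R}) (Lam : nat -> R) :
  lin_operator L -> (forall n, L (Phi n) = Lam n *: Phi n) ->
  forall n, r * L (phi n) = (Lam n * A n * B n.+1) *: phi n.+1
    + (Lam n * A n ^+ 2 + prevr Lam n * B n ^+ 2) *: phi n
    + prevr (fun k => Lam k * A k * B k.+1) n *: prevp phi n.
Proof.
move=> L_lin L_Phi n.
rewrite [phi n in LHS]phiE (lin_operatorD L_lin) !(lin_operatorZ L_lin) L_Phi.
rewrite mulrDr -!scalerAr mulr_PhiE.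
case: n => [|n] /=.
  rewrite (lin_operator0 L_lin) mulr0 !scaler0 !addr0.
  rewrite -!mul_polyC !(rmorphD, rmorphM, rmorphXn, rmorph0) /=; ring.
rewrite L_Phi -scalerAr mulr_PhiE.
rewrite -!mul_polyC !(rmorphD, rmorphM, rmorphXn) /=; ring.
Qed.

Hypothesis B0 : B 0 = 0.

Lemma mulr_three_term n :
  r * phi n = (A n * B n.+1) *: phi n.+1 + (A n ^+ 2 + B n ^+ 2) *: phi n
              + prevr (fun k => A k * B k.+1) n *: prevp phi n.
Proof.
have id_lin : lin_operator (@id {poly R}) by [].
have := three_term_recurrence (Lam := fun _ => 1) id_lin (fun k => esym (scale1r _)) n.
by case: n => [|n] /=; rewrite !mul1r // B0 expr0n mulr0.
Qed.

End ThreeTermRecurrence.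

Theorem mainTheorem1 (R : rcfType) (mu nu : {poly R} -> R) (r : {poly R})
  (P p : nat -> {poly R}) (L : {poly R} -> {poly R}) (Lam : nat -> R) :
  pos_def_functional mu -> pos_def_functional nu ->
  size r = 2%N ->
  (forall f : {poly R}, mu f = nu (f * r)) ->
  orth_seq mu P -> orth_seq nu p ->
  lin_operator L ->
  (forall n, L (P n) = Lam n *: P n) ->
  let Phi := onp mu P in
  let phi := onp nu p in
  let A := Acoef mu nu P p in
  let B := Bcoef mu nu r P p in
  let a := acoef mu nu r P p Lam in
  let b := bcoef mu nu r P p Lam in
  (forall n, phi n = A n *: Phi n + B n *: prevp Phi n) /\
  (forall n, a n = Lam n * lead_coef r * (lead_coef (p n) / lead_coef (p n.+1))
                   * Num.sqrt (sqnorm nu p n.+1 / sqnorm nu p n)) /\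
  (forall n, r * L (phi n) = a n *: phi n.+1 + b n *: phi n + prevr a n *: prevp phi n) /\
  (forall n, r * phi n = (A n * B n.+1) *: phi n.+1 + (A n ^+ 2 + B n ^+ 2) *: phi n
                         + prevr (fun k => A k * B k.+1) n *: prevp phi n).
Proof.
move=> mu_pd nu_pd size_r mu_nu P_orth p_orth L_lin L_P Phi phi A B a b.
have phiE := onp_connection mu_pd nu_pd size_r mu_nu P_orth p_orth.
have mulr_PhiE := mulr_onp_connection mu_pd nu_pd size_r mu_nu P_orth p_orth.
have L_Phi n : L (Phi n) = Lam n *: Phi n.
  by rewrite /Phi /onp (lin_operatorZ L_lin) L_P !scalerA mulrC.
split; first exact: phiE.
split; first exact: (acoefE r mu_pd nu_pd P_orth p_orth).
split; first exact: (three_term_recurrence phiE mulr_PhiE L_lin L_Phi).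
exact: (mulr_three_term phiE mulr_PhiE (erefl : B 0 = 0)).
Qed.
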